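(* Let $0<c\le a_2$. Any partial listing $\phi$ of $A$ becomes $K_c$-connected after at most $c-2$ further calls to Next$(\varnothing)$.
   Context: Let $k\ge 2$ and let $a_k,\dots,a_2$ be positive integers with $a_2\le a_i$ for all $2<i\le k$. Let $A=[a_k]\times\cdots\times[a_2]$, where $[a]=\{0,\dots,a-1\}$; elements are written $\alpha=\alpha_k\alpha_{k-1}\cdots\alpha_2$. A prefix of $\alpha$ is $\alpha_k\cdots\alpha_{l+1}$ for some $2\le l+1\le k$; $\varnothing$ denotes the empty prefix; for a tuple $\beta=\alpha_k\cdots\alpha_{l+1}$ and $i$, $\beta i$ denotes $\alpha_k\cdots\alpha_{l+1}i$. An array $\phi:A\to\{0,1\}$ is initialized to $0$ everywhere. A tuple $\beta$ (a prefix or an element) is non-empty if some $\alpha\in A$ having $\beta$ as a prefix (or equal to $\beta$) has $\phi(\alpha)=1$, empty otherwise, and full if all such $\alpha$ have $\phi(\alpha)=1$. The procedure Next$(\beta)$, for $\beta=\alpha_k\cdots\alpha_{l+1}$ (with $l=k$ for $\beta=\varnothing$): let $m$ be the least $i$ such that $\beta i$ is empty; if $l=2$, set $\phi(\beta m):=1$ and stop; otherwise, if $m\ge a_2$, replace $m$ by the least $i$ such that $\beta i$ is not full; then call Next$(\beta m)$. A partial listing of $A$ is an array $\phi$ obtained from the all-zero array by finitely many calls of Next$(\varnothing)$. For $0<c\le a_2$, a partial listing $\phi$ is $K_c$-connected if for every prefix $\alpha'$ (for which $\alpha'1$ is defined), whenever $\alpha'1$ is non-empty, $\alpha'(c-1)$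 is also non-empty. *)

From mathcomp Require Import all_boot.
Set Implicit Arguments. Unset Strict Implicit. Unset Printing Implicit Defensive.

(* The bounds a_k, ..., a_2 are given by a function [a : nat -> nat]
   (only a 2, ..., a k matter).  A tuple beta = alpha_k alpha_(k-1) ... alpha_(l+1)
   is represented by the sequence [:: alpha_k; alpha_(k-1); ...; alpha_(l+1)],
   so position j (0-based) carries coordinate index k - j, and
   l = k - size beta.  Elements of A are sequences of size k - 1.
   An array phi : A -> {0,1} is represented by [phi : seq nat -> bool]; only
   its values on elements of A are ever inspected. *)

Definition listing := seq nat -> bool.

Definition in_range (a : nat -> nat) (k : nat) (b : seq nat) : bool :=
  all (fun j => nth 0 b j < a (k - j)) (iota 0 (size b)).

Definition is_elem (a : nat -> nat) (k : nat) (alpha : seq nat) : bool :=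
  (size alpha == k.-1) && in_range a k alpha.

Definition nonempty (a : nat -> nat) (k : nat) (phi : listing) (beta : seq nat) : Prop :=
  exists alpha, [/\ is_elem a k alpha, prefix beta alpha & phi alpha].

Definition empty a k phi beta : Prop := ~ nonempty a k phi beta.

Definition full (a : nat -> nat) (k : nat) (phi : listing) (beta : seq nat) : Prop :=
  forall alpha, is_elem a k alpha -> prefix beta alpha -> phi alpha.

Definition least_empty a k phi beta (m : nat) : Prop :=
  empty a k phi (rcons beta m) /\ forall i, i < m -> nonempty a k phi (rcons beta i).

Definition least_nonfull a k phi beta (m : nat) : Prop :=
  ~ full a k phi (rcons beta m) /\ forall i, i < m -> full a k phi (rcons beta i).

Definition set1 (phi : listing) (x : seq nat) : listing :=
  fun y => (y == x) || phi y.

(* NextR a k phi beta phi' : the call Next(beta) on the array phi terminates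
   with array phi'.  Here l = k - size beta. *)
Inductive NextR (a : nat -> nat) (k : nat) :
    listing -> seq nat -> listing -> Prop :=
| Next_leaf phi beta m :
    k - size beta = 2 ->
    least_empty a k phi beta m ->
    NextR a k phi beta (set1 phi (rcons beta m))
| Next_small phi beta m phi' :
    2 < k - size beta ->
    least_empty a k phi beta m ->
    m < a 2 ->
    NextR a k phi (rcons beta m) phi' ->
    NextR a k phi beta phi'
| Next_large phi beta m0 m phi' :
    2 < k - size beta ->
    least_empty a k phi beta m0 ->
    a 2 <= m0 ->
    least_nonfull a k phi beta m ->
    NextR a k phi (rcons beta m) phi' ->
    NextR a k phi beta phi'.

Inductive IterNext (a : nat -> nat) (k : nat) : nat -> listing -> listing -> Prop :=
| Iter0 phi : IterNext a k 0 phi phi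
| IterS n phi phi1 phi2 :
    NextR a k phi [::] phi1 -> IterNext a k n phi1 phi2 -> IterNext a k n.+1 phi phi2.

Definition zero_listing : listing := fun _ => false.

Definition partial_listing (a : nat -> nat) (k : nat) (phi : listing) : Prop :=
  exists n, IterNext a k n zero_listing phi.

(* alpha' is a prefix alpha_k ... alpha_(l+1) with l >= 2 (including the empty
   prefix), so that alpha' i is again a prefix or an element *)
Definition is_short_prefix (a : nat -> nat) (k : nat) (b : seq nat) : bool :=
  (size b <= k - 2) && in_range a k b.

Definition Kc_connected (a : nat -> nat) (k : nat) (c : nat) (phi : listing) : Prop :=
  forall alpha', is_short_prefix a k alpha' ->
    1 < a (k - size alpha') ->
    nonempty a k phi (rcons alpha' 1) ->
    nonempty a k phi (rcons alpha' c.-1).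

From Pilot Require Import Defs.
From mathcomp Require Import all_boot zify.
From Stdlib Require Import Classical.
Set Implicit Arguments. Unset Strict Implicit. Unset Printing Implicit Defensive.

(* Every partial listing is regular: along the path of the prefixes that
   Next(∅) is still filling, each prefix either has an initial run of children
   holding only their first element, or has full children, then one regular
   child, then children as in the first case.  A prefix violating
   K_c-connectivity then has an initial run of 2 <= p <= c-1 children holding
   only their first element and empty children beyond; there is at most one
   such prefix, and Next(∅) descends straight to it and lists the first
   element of its child p.  Each call thus lengthens the run by one, and after
   at most c-2 calls it reaches the child c-1. *)

Section Prefix.
Variable T : eqType.
Implicit Types (s t u : seq T) (x y : T).

Lemma prefix_rcons_exists s t : prefix s t -> size s < size t ->
  exists x, prefix (rcons s x) t.
Proof.
move=> /prefixP[[|x u] ->]; first by rewrite cats0 ltnn.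
by exists x; rewrite -cat_rcons prefix_prefix.
Qed.

Lemma prefix_rcons_inj s t x y :
  prefix (rcons s x) t -> prefix (rcons s y) t -> x = y.
Proof. by rewrite !prefixE !size_rcons => /eqP -> /eqP /rcons_inj[]. Qed.

Lemma prefix_of_prefix_size s t u :
  prefix s u -> prefix t u -> size s <= size t -> prefix s t.
Proof. by rewrite !prefixE => /eqP Hs /eqP Ht Hst; rewrite -Ht take_takel // Hs. Qed.

Lemma prefix_size_eq s t : prefix s t -> size s = size t -> s = t.
Proof. by rewrite prefixE => /eqP Hs Hst; rewrite -Hs Hst take_size. Qed.

Lemma prefix_rcons_cat s t u x :
  prefix (rcons s x) (t ++ u) -> prefix (rcons s x) t \/ x \in u.
Proof.
move=> Hp; case: (ltnP (size s) (size t)) => Hst.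
  by left; apply: prefix_of_prefix_size Hp (prefix_prefix t u) _; rewrite size_rcons.
right; have Hsz := size_prefix Hp; rewrite size_rcons size_cat in Hsz.
move/prefixP: Hp => [w Hw].
have : nth x (t ++ u) (size s) = x.
  by rewrite Hw nth_cat size_rcons ltnSn nth_rcons ltnn eqxx.
by rewrite nth_cat ltnNge Hst /= => <-; apply: mem_nth; lia.
Qed.

Lemma prefix_or_fork s t : [\/ prefix s t, prefix t s |
  exists u x y s' t', [/\ x != y, s = u ++ x :: s' & t = u ++ y :: t']].
Proof.
elim: s t => [|x s IH] [|y t]; rewrite ?prefix0s ?prefixs0 ?orbT; auto using Or31, Or32.
case: (eqVneq x y) => [<-|Hxy]; last first.
  by apply: Or33; exists [::], x, y, s, t.
rewrite !prefix_cons eqxx /=.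
case: (IH t) => [||[u [x' [y' [s' [t' [Hxy E1 E2]]]]]]]; auto using Or31, Or32.
by apply: Or33; exists (x :: u), x', y', s', t'; rewrite E1 E2.
Qed.

End Prefix.

Lemma exists_least (P : nat -> Prop) n : P n ->
  exists m, P m /\ forall i, i < m -> ~ P i.
Proof.
elim/ltn_ind: n => n IH Pn.
case: (classic (exists2 i, i < n & P i)) => [[i Hi Pi]|Hno]; first exact: IH Pi.
by exists n; split=> // i Hi Pi; apply: Hno; exists i.
Qed.

Section Listing.
Variables (a : nat -> nat) (k : nat).
Hypothesis k_ge2 : 2 <= k.
Hypothesis a_pos : forall i, 2 <= i <= k -> 0 < a i.
Hypothesis a2_min : forall i, 2 < i <= k -> a 2 <= a i.
Implicit Types (phi psi : listing) (b d g s t x y : seq nat).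

Lemma a2_gt0 : 0 < a 2.
Proof. by apply: a_pos; rewrite leqnn. Qed.

Lemma a2_le b : size b <= k - 2 -> a 2 <= a (k - size b).
Proof.
move=> Hb; case: (ltnP 2 (k - size b)) => H; first by apply: a2_min; lia.
by have -> : k - size b = 2 by lia.
Qed.

Lemma in_rangeP b :
  reflect (forall j, j < size b -> nth 0 b j < a (k - j)) (in_range a k b).
Proof.
apply: (iffP allP) => H j.
  by move=> Hj; apply: H; rewrite mem_iota add0n.
by rewrite mem_iota add0n => /andP[_ Hj]; exact: H.
Qed.

Lemma in_range_cat b s : in_range a k (b ++ s) <->
  in_range a k b /\ forall j, j < size s -> nth 0 s j < a (k - (size b + j)).
Proof.
split.
  move/in_rangeP => H; split.
    by apply/in_rangeP => j Hj; have := H j; rewrite size_cat nth_cat Hj; apply; lia.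
  move=> j Hj; have := H (size b + j); rewrite size_cat nth_cat.
  by rewrite (_ : size b + j < size b = false) ?addKn; [apply; lia | lia].
move=> [/in_rangeP H1 H2]; apply/in_rangeP => j; rewrite size_cat nth_cat => Hj.
case: (ltnP j (size b)) => Hjb; first exact: H1.
by have := H2 (j - size b); rewrite subnKC //; apply; lia.
Qed.

Lemma in_range_rcons b i :
  in_range a k (rcons b i) <-> in_range a k b /\ i < a (k - size b).
Proof.
rewrite -cats1 in_range_cat; split=> -[Hb Hi]; split=> //.
  by have := Hi 0 erefl; rewrite addn0.
by case=> //= _; rewrite addn0.
Qed.

Lemma in_range_rcons_small b i :
  in_range a k b -> size b <= k - 2 -> i < a 2 -> in_range a k (rcons b i).
Proof.
by move=> Hb Hs Hi; apply/in_range_rcons; split=> //; have := a2_le Hs; lia.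
Qed.

Lemma in_range_prefix s t : prefix s t -> in_range a k t -> in_range a k s.
Proof. by move=> /prefixP[u ->] /in_range_cat[]. Qed.

Lemma rcons_out_of_range b i : a (k - size b) <= i -> ~~ in_range a k (rcons b i).
Proof. by move=> H; apply/negP => /in_range_rcons[_]; lia. Qed.

Lemma is_elem_in_range y : is_elem a k y -> in_range a k y.
Proof. by case/andP. Qed.

Lemma is_elem_size y : is_elem a k y -> size y = k.-1.
Proof. by case/andP=> /eqP. Qed.

Definition zero_ext b := b ++ nseq (k.-1 - size b) 0.

Lemma zero_ext_elem b : in_range a k b -> size b <= k.-1 -> is_elem a k (zero_ext b).
Proof.
move=> Hb Hs; rewrite /is_elem /zero_ext size_cat size_nseq subnKC // eqxx /=.
apply/in_range_cat; split=> // j; rewrite size_nseq nth_nseq => Hj.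
by rewrite Hj; apply: a_pos; lia.
Qed.

Lemma zero_ext_rcons0 b : size b < k.-1 -> zero_ext (rcons b 0) = zero_ext b.
Proof.
move=> Hb; rewrite /zero_ext size_rcons -cats1 -catA cat1s.
by have -> : k.-1 - size b = (k.-1 - (size b).+1).+1 by lia.
Qed.

Lemma zero_ext_id b : size b = k.-1 -> zero_ext b = b.
Proof. by move=> Hb; rewrite /zero_ext Hb subnn cats0. Qed.

Lemma prefix_rcons_zero_ext b i : prefix (rcons b i) (zero_ext b) -> i = 0.
Proof.
case/prefix_rcons_cat; last by move/nseqP=> [].
by move/size_prefix; rewrite size_rcons ltnn.
Qed.

Section Cells.
Variable phi : listing.

Lemma nonempty_prefix s t : prefix s t -> nonempty a k phi t -> nonempty a k phi s.
Proof.
by move=> Hst [y [Hy Hty Hphi]]; exists y; split=> //; exact: prefix_trans Hty.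
Qed.

Lemma full_prefix s t : prefix s t -> full a k phi s -> full a k phi t.
Proof. by move=> Hst Hs y Hy Hty; apply: Hs => //; exact: prefix_trans Hty. Qed.

Lemma empty_rcons b i : empty a k phi b -> empty a k phi (rcons b i).
Proof. by move=> Hb /(nonempty_prefix (prefix_rcons b i)). Qed.

Lemma full_rcons b i : full a k phi b -> full a k phi (rcons b i).
Proof. exact/full_prefix/prefix_rcons. Qed.

Lemma nonempty_in_range b : nonempty a k phi b -> in_range a k b.
Proof. by move=> [y [Hy Hby _]]; apply: in_range_prefix Hby (is_elem_in_range Hy). Qed.

Lemma empty_out_of_range b : ~~ in_range a k b -> empty a k phi b.
Proof. by move=> /negP Hb /nonempty_in_range. Qed.

Lemma full_out_of_range b : ~~ in_range a k b -> full a k phi b.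
Proof.
by move=> /negP Hb y Hy Hby; case: Hb; apply: in_range_prefix Hby (is_elem_in_range Hy).
Qed.

Lemma nonfull_in_range b : ~ full a k phi b -> in_range a k b.
Proof. by move=> Hb; apply/negPn/negP => /full_out_of_range. Qed.

Lemma full_nonempty b :
  in_range a k b -> size b <= k.-1 -> full a k phi b -> nonempty a k phi b.
Proof.
move=> Hb Hs Hfull; have He := zero_ext_elem Hb Hs.
have Hpre : prefix b (zero_ext b) by exact: prefix_prefix.
by exists (zero_ext b); split=> //; apply: Hfull.
Qed.

Lemma nonfull_witness b : ~ full a k phi b ->
  exists y, [/\ is_elem a k y, prefix b y & ~~ phi y].
Proof.
move=> Hb; apply: NNPP => Hno; apply: Hb => y Hy Hby.
by apply/negPn/negP => Hphi; apply: Hno; exists y.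
Qed.

Lemma nonempty_elem_full b : size b = k.-1 -> nonempty a k phi b -> full a k phi b.
Proof.
move=> Hb [y [Hy Hby Hphi]] z Hz Hbz.
have Ey : b = y by apply: (prefix_size_eq Hby); rewrite Hb (is_elem_size Hy).
have Ez : b = z by apply: (prefix_size_eq Hbz); rewrite Hb (is_elem_size Hz).
by rewrite -Ez Ey.
Qed.

Lemma least_empty_le b m p :
  least_empty a k phi b m -> empty a k phi (rcons b p) -> m <= p.
Proof. by move=> [_ Hlt] Hp; rewrite leqNgt; apply/negP => /Hlt. Qed.

Lemma least_empty_ge b m q : least_empty a k phi b m ->
  (forall i, i < q -> nonempty a k phi (rcons b i)) -> q <= m.
Proof. by move=> [Hm _] Hlt; rewrite leqNgt; apply/negP => /Hlt. Qed.

Lemma least_nonfull_ge b m q : least_nonfull a k phi b m ->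
  (forall i, i < q -> full a k phi (rcons b i)) -> q <= m.
Proof. by move=> [Hm _] Hlt; rewrite leqNgt; apply/negP => /Hlt. Qed.

End Cells.

Lemma least_empty_exists phi b : exists m, least_empty a k phi b m.
Proof.
have [m [Hm Hlt]] := @exists_least (fun i => empty a k phi (rcons b i)) _
  (empty_out_of_range (rcons_out_of_range (leqnn (a (k - size b))))).
by exists m; split=> // i /Hlt /NNPP.
Qed.

Lemma nonempty_set1 phi x b : nonempty a k phi b -> nonempty a k (Defs.set1 phi x) b.
Proof. by move=> [y [Hy Hby Hphi]]; exists y; rewrite /Defs.set1 Hphi orbT. Qed.

Lemma nonempty_set1_self phi x b :
  is_elem a k x -> prefix b x -> nonempty a k (Defs.set1 phi x) b.
Proof. by move=> Hx Hbx; exists x; rewrite /Defs.set1 eqxx. Qed.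

Lemma full_set1 phi x b : full a k phi b -> full a k (Defs.set1 phi x) b.
Proof. by move=> Hb y Hy Hby; rewrite /Defs.set1 Hb ?orbT. Qed.

Lemma set1_nonempty_inv phi x b :
  nonempty a k (Defs.set1 phi x) b -> nonempty a k phi b \/ prefix b x.
Proof.
move=> [y [Hy Hby]]; case/orP=> [/eqP <-|Hphi]; first by right.
by left; exists y.
Qed.

Definition first_only phi b : Prop :=
  forall y, is_elem a k y -> prefix b y -> phi y = (y == zero_ext b).

Lemma first_only_nonempty phi b :
  in_range a k b -> size b <= k.-1 -> first_only phi b -> nonempty a k phi b.
Proof.
move=> Hb Hs Hfirst; have He := zero_ext_elem Hb Hs.
have Hpre : prefix b (zero_ext b) by exact: prefix_prefix.
by exists (zero_ext b); rewrite Hfirst ?eqxx.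
Qed.

Lemma first_only_rcons0 phi b :
  size b < k.-1 -> first_only phi b -> first_only phi (rcons b 0).
Proof.
move=> Hs Hfirst y Hy Hby; rewrite zero_ext_rcons0 //; apply: Hfirst => //.
exact: prefix_trans (prefix_rcons b 0) Hby.
Qed.

Lemma first_only_rcons_empty phi b i :
  0 < i -> first_only phi b -> empty a k phi (rcons b i).
Proof.
move=> Hi Hfirst [y [Hy Hby]]; rewrite Hfirst //; last first.
  exact: prefix_trans (prefix_rcons b i) Hby.
by move/eqP=> Ey; move: Hby; rewrite Ey => /prefix_rcons_zero_ext; lia.
Qed.

Lemma first_only_elem phi b : size b = k.-1 -> full a k phi b -> first_only phi b.
Proof.
move=> Hb Hfull y Hy Hby; rewrite zero_ext_id //.
have Ey : b = y by apply: (prefix_size_eq Hby); rewrite Hb (is_elem_size Hy).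
by subst y; rewrite eqxx; apply: Hfull.
Qed.

Lemma empty_set1_first_only phi b :
  empty a k phi b -> first_only (Defs.set1 phi (zero_ext b)) b.
Proof.
move=> He y Hy Hby; rewrite /Defs.set1; case: eqP => //= _.
by apply/negbTE/negP => Hphi; apply: He; exists y.
Qed.

Definition agree_below phi psi b : Prop :=
  forall y, is_elem a k y -> prefix b y -> phi y = psi y.

Lemma agree_below_prefix phi psi s t :
  prefix s t -> agree_below phi psi s -> agree_below phi psi t.
Proof. by move=> Hst Hs y Hy Hty; apply: Hs => //; exact: prefix_trans Hty. Qed.

Lemma agree_below_nonempty phi psi b :
  agree_below phi psi b -> nonempty a k phi b <-> nonempty a k psi b.
Proof.
by move=> Hag; split=> -[y [Hy Hby Hphi]]; exists y; split; rewrite // ?Hag // -Hag.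
Qed.

Lemma agree_below_full phi psi b :
  agree_below phi psi b -> full a k phi b <-> full a k psi b.
Proof.
by move=> Hag; split=> Hb y Hy Hby; [rewrite -Hag | rewrite Hag] => //; apply: Hb.
Qed.

Lemma agree_below_first_only phi psi b :
  agree_below phi psi b -> first_only phi b <-> first_only psi b.
Proof.
by move=> Hag; split=> Hb y Hy Hby; [rewrite -Hag | rewrite Hag] => //; apply: Hb.
Qed.

Lemma agree_below_set1_full phi x b :
  full a k phi b -> agree_below phi (Defs.set1 phi x) b.
Proof. by move=> Hb y Hy Hby; rewrite /Defs.set1 Hb ?orbT. Qed.

Lemma agree_below_set1_sibling phi x b m i :
  prefix (rcons b m) x -> i != m -> agree_below phi (Defs.set1 phi x) (rcons b i).
Proof.
move=> Hmx Him y Hy Hiy; rewrite /Defs.set1; case: eqP => //= Eyx.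
by move: Him Hiy; rewrite Eyx => /eqP Him /prefix_rcons_inj/(_ Hmx).
Qed.

Definition sparse phi b p : Prop :=
  [/\ p <= a 2, forall i, i < p -> first_only phi (rcons b i)
    & forall i, p <= i -> empty a k phi (rcons b i)].

Definition sparse_above phi b q : Prop :=
  (forall i, q < i -> i < a 2 -> first_only phi (rcons b i)) /\
  (forall i, q < i -> a 2 <= i -> empty a k phi (rcons b i)).

Definition dense phi b q : Prop :=
  [/\ forall i, i < q -> full a k phi (rcons b i), sparse_above phi b q
    & q < a 2 -> nonempty a k phi (rcons b q)].

Fixpoint regular_depth n phi b : Prop :=
  match n with
  | 0 => True
  | n.+1 => (exists p, sparse phi b p) \/
            (exists q, dense phi b q /\ regular_depth n phi (rcons b q))
  end.

Definition regular phi b := regular_depth (k.-1 - size b) phi b.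

Lemma regularE phi b : size b < k.-1 -> regular phi b <->
  (exists p, sparse phi b p) \/ (exists q, dense phi b q /\ regular phi (rcons b q)).
Proof.
move=> Hb; rewrite [regular phi b]/regular.
have -> : k.-1 - size b = (k.-1 - (size b).+1).+1 by lia.
split=> -[Hsp|[q [Hd Hr]]]; try by left.
all: by right; exists q; split=> //; move: Hr; rewrite /regular size_rcons.
Qed.

Lemma regular_elem phi b : size b = k.-1 -> regular phi b.
Proof. by move=> Hb; rewrite /regular Hb subnn. Qed.

Lemma sparse_children_nonempty phi b p i : in_range a k b -> size b <= k - 2 ->
  sparse phi b p -> i < p -> nonempty a k phi (rcons b i).
Proof.
move=> Hb Hs [Hp Hfirst _] Hi; apply: first_only_nonempty (Hfirst i Hi).
- by apply: in_range_rcons_small; lia.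
- by rewrite size_rcons; lia.
Qed.

Lemma dense_children_nonempty phi b q i : in_range a k b -> size b <= k - 2 ->
  dense phi b q -> i < a 2 -> nonempty a k phi (rcons b i).
Proof.
move=> Hb Hs [Hfull [Hfirst _] Hq] Hi.
have Hr := in_range_rcons_small Hb Hs Hi.
have Hsz : size (rcons b i) <= k.-1 by rewrite size_rcons; lia.
case: (ltngtP i q) => Hiq; last by rewrite Hiq; apply: Hq; rewrite -Hiq.
- exact: full_nonempty Hr Hsz (Hfull i Hiq).
- exact: first_only_nonempty Hr Hsz (Hfirst i Hiq Hi).
Qed.

Lemma sparse_least_empty phi b p m : in_range a k b -> size b <= k - 2 ->
  sparse phi b p -> least_empty a k phi b m -> m = p.
Proof.
move=> Hb Hs Hsp Hm; have [_ _ Hempty] := Hsp; apply/eqP; rewrite eqn_leq.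
rewrite (least_empty_le Hm (Hempty p (leqnn p))).
exact: least_empty_ge Hm (fun i => sparse_children_nonempty Hb Hs Hsp).
Qed.

Lemma sparse_above_agree phi psi b q :
  (forall i, q < i -> agree_below phi psi (rcons b i)) ->
  sparse_above phi b q -> sparse_above psi b q.
Proof.
move=> Hag [Hfirst Hempty]; split=> i Hqi Hi.
  by rewrite -(agree_below_first_only (Hag i Hqi)); apply: Hfirst.
by rewrite /empty -(agree_below_nonempty (Hag i Hqi)); apply: Hempty.
Qed.

Lemma sparse_sparse_above phi b q : sparse phi b (a 2) -> sparse_above phi b q.
Proof.
by move=> [_ Hfirst Hempty]; split=> i _ Hi; [apply: Hfirst | apply: Hempty].
Qed.

Lemma dense_sparse_above phi b q m : dense phi b q -> q <= m -> sparse_above phi b m.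
Proof.
move=> [_ [Hfirst Hempty] _] Hqm; split=> i Hmi Hi.
  by apply: Hfirst => //; lia.
by apply: Hempty => //; lia.
Qed.

Lemma sparse_after phi psi b m :
  (forall i, i != m -> agree_below phi psi (rcons b i)) ->
  sparse phi b m -> m < a 2 -> first_only psi (rcons b m) -> sparse psi b m.+1.
Proof.
move=> Hag [_ Hfirst Hempty] Hm Hnew; split=> // i Hi.
  case: (eqVneq i m) => [-> //|Him].
  by rewrite -(agree_below_first_only (Hag i Him)); apply: Hfirst; lia.
have Him : i != m by lia.
by rewrite /empty -(agree_below_nonempty (Hag i Him)); apply: Hempty; lia.
Qed.

Lemma dense_after phi psi b m :
  (forall i, i != m -> agree_below phi psi (rcons b i)) -> sparse_above phi b m ->
  (forall i, i < m -> full a k psi (rcons b i)) -> nonempty a k psi (rcons b m) ->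
  dense psi b m.
Proof.
move=> Hag Habove Hfull Hm; split=> //.
by apply: sparse_above_agree Habove => i Hi; apply: Hag; lia.
Qed.

Lemma regular_agree phi psi b : agree_below phi psi b -> regular phi b -> regular psi b.
Proof.
rewrite /regular; move: (k.-1 - size b) => n; elim: n b => [//|n IH] b Hag.
have Hc i : agree_below phi psi (rcons b i).
  exact: agree_below_prefix (prefix_rcons b i) Hag.
move=> [[p [Hp Hfirst Hempty]] | [q [[Hfull Habove Hq] Hreg]]].
  left; exists p; split=> // i Hi.
    by rewrite -(agree_below_first_only (Hc i)); apply: Hfirst.
  by rewrite /empty -(agree_below_nonempty (Hc i)); apply: Hempty.
right; exists q; split; last exact: IH (Hc q) Hreg.
split.
- by move=> i Hi; rewrite -(agree_below_full (Hc i)); apply: Hfull.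
- by apply: sparse_above_agree Habove => i _.
- by rewrite -(agree_below_nonempty (Hc q)).
Qed.

Lemma regular_empty phi b : empty a k phi b -> regular phi b.
Proof.
rewrite /regular => He; case: (k.-1 - size b) => //= n.
by left; exists 0; split=> // i _; apply: empty_rcons.
Qed.

Lemma regular_first_only phi b :
  size b <= k.-1 -> first_only phi b -> regular phi b.
Proof.
move=> Hs Hfirst; case: (ltnP (size b) k.-1) => Hb; last by apply: regular_elem; lia.
apply/regularE => //; left; exists 1; split=> [|i|i Hi]; first exact: a2_gt0.
  by rewrite ltnS leqn0 => /eqP ->; apply: first_only_rcons0.
by apply: first_only_rcons_empty Hfirst.
Qed.

Lemma regular_full phi b : size b <= k.-1 -> full a k phi b -> regular phi b.
Proof.
move Et: (k.-1 - size b) => t; elim: t b Et => [|t IH] b Et Hs Hfull.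
  by rewrite /regular Et.
have Hb : size b < k.-1 by lia.
have Ha := @a2_le b ltac:(lia).
apply/regularE => //; right; exists (a (k - size b)); split.
  split=> [i _||]; first exact: full_rcons.
    split=> i Hi Hi2; first lia.
    exact/empty_out_of_range/rcons_out_of_range/ltnW.
  by move=> Hq; lia.
by apply: IH; [rewrite size_rcons; lia | rewrite size_rcons; lia | exact: full_rcons].
Qed.

Lemma regular_rcons phi b i : size b < k.-1 -> regular phi b -> regular phi (rcons b i).
Proof.
move=> Hb /regularE-/(_ Hb).
case=> [[p [_ Hfirst Hempty]]|[q [[Hfull [Hfirst Hempty] _] Hreg]]].
  case: (ltnP i p) => Hi; last exact/regular_empty/Hempty.
  by apply: regular_first_only (Hfirst i Hi); rewrite size_rcons.
case: (ltngtP i q) => [Hi|Hi|->] //.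
  by apply: regular_full (Hfull i Hi); rewrite size_rcons.
case: (ltnP i (a 2)) => Hi2; last exact/regular_empty/Hempty.
by apply: regular_first_only (Hfirst i Hi Hi2); rewrite size_rcons.
Qed.

Lemma regular_nil phi b : regular phi [::] -> size b <= k.-1 -> regular phi b.
Proof.
move=> Hnil; elim/last_ind: b => [//|b i IH]; rewrite size_rcons => Hs.
by apply: regular_rcons; [lia | apply: IH; lia].
Qed.

Definition next_spec phi b psi : Prop :=
  [/\ ~ full a k phi b ->
        exists x, [/\ is_elem a k x, prefix b x & psi = Defs.set1 phi x],
      empty a k phi b -> psi = Defs.set1 phi (zero_ext b)
    & regular psi b].

Lemma least_empty_leaf_elem phi b m : k - size b = 2 -> least_empty a k phi b m ->
  ~ full a k phi b -> is_elem a k (rcons b m).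
Proof.
move=> Hsb Hm Hnf; have [y [Hy Hby Hphi]] := nonfull_witness Hnf.
have Hsz i : size (rcons b i) = k.-1 by rewrite size_rcons; lia.
have Hby_lt : size b < size y by rewrite (is_elem_size Hy); lia.
have [j Hj] := prefix_rcons_exists Hby Hby_lt.
have Ey : rcons b j = y by apply: (prefix_size_eq Hj); rewrite (is_elem_size Hy).
have Hmj : m <= j.
  apply: least_empty_le Hm _ => /(nonempty_elem_full (Hsz j)) /(_ y Hy Hj).
  by rewrite (negbTE Hphi).
have := is_elem_in_range Hy; rewrite -Ey => /in_range_rcons[_ Hja].
rewrite /is_elem Hsz eqxx /=; apply/in_range_rcons; split; last lia.
exact: in_range_prefix Hby (is_elem_in_range Hy).
Qed.

Lemma regular_leaf_set1 phi b m : k - size b = 2 -> least_empty a k phi b m ->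
  is_elem a k (rcons b m) -> in_range a k b -> regular phi b ->
  regular (Defs.set1 phi (rcons b m)) b.
Proof.
move=> Hsb Hm Hx Hb Hreg; set psi := Defs.set1 phi (rcons b m).
have Hs : size b <= k - 2 by lia.
have Hsz i : size (rcons b i) = k.-1 by rewrite size_rcons; lia.
have Hag i : i != m -> agree_below phi psi (rcons b i).
  exact: agree_below_set1_sibling (prefix_refl _).
have Hnew : nonempty a k psi (rcons b m) := nonempty_set1_self phi Hx (prefix_refl _).
have Hdense : sparse_above phi b m -> regular psi b.
  move=> Habove; apply/regularE; first lia.
  right; exists m; split; last exact: regular_elem.
  apply: dense_after Hag Habove _ Hnew => i Hi.
  exact/full_set1/(nonempty_elem_full (Hsz i))/(Hm.2 i Hi).
move/regularE: Hreg => /(_ ltac:(lia)) [[p Hsp]|[q [Hd _]]].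
  have Emp := sparse_least_empty Hb Hs Hsp Hm; subst p.
  case: (ltnP m (a 2)) => Hma.
    apply/regularE; first lia.
    left; exists m.+1; apply: sparse_after Hag Hsp Hma _.
    exact/(first_only_elem (Hsz m))/(nonempty_elem_full (Hsz m)).
  apply/Hdense/sparse_sparse_above; have [Hma' _ _] := Hsp.
  by have <- : m = a 2 by lia.
apply/Hdense/(dense_sparse_above Hd); rewrite leqNgt; apply/negP => Hmq.
have [Hq_full _ _] := Hd; apply: Hm.1.
exact: full_nonempty (is_elem_in_range Hx) (eq_leq (Hsz m)) (Hq_full m Hmq).
Qed.

Lemma next_spec_leaf phi b m : k - size b = 2 -> least_empty a k phi b m ->
  in_range a k b -> regular phi b -> next_spec phi b (Defs.set1 phi (rcons b m)).
Proof.
move=> Hsb Hm Hb Hreg; split.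
- move=> Hnf; exists (rcons b m); split; last by [].
    exact: least_empty_leaf_elem Hsb Hm Hnf.
  exact: prefix_rcons.
- move=> He; have Hm0 := least_empty_le Hm (empty_rcons (i:=0) He).
  have -> : m = 0 by lia.
  by rewrite -zero_ext_rcons0 ?zero_ext_id ?size_rcons //; lia.
case: (classic (full a k phi b)) => Hfull.
  exact: regular_agree (agree_below_set1_full _ Hfull) Hreg.
exact: regular_leaf_set1 Hsb Hm (least_empty_leaf_elem Hsb Hm Hfull) Hb Hreg.
Qed.

Lemma next_spec_small phi b m psi : 2 < k - size b -> least_empty a k phi b m ->
  m < a 2 ->
  (in_range a k (rcons b m) -> regular phi (rcons b m) ->
     next_spec phi (rcons b m) psi) ->
  in_range a k b -> regular phi b -> next_spec phi b psi.
Proof.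
move=> Hsb Hm Hma IH Hb Hreg.
have Hs : size b <= k - 2 by lia.
have Hr := in_range_rcons_small Hb Hs Hma.
have He := Hm.1.
have [_ IH_empty _] := IH Hr (regular_empty He).
have Epsi := IH_empty He; subst psi.
split.
- move=> _; exists (zero_ext (rcons b m)); split=> //.
    by apply: zero_ext_elem Hr _; rewrite size_rcons; lia.
  exact: prefix_trans (prefix_rcons b m) (prefix_prefix _ _).
- move=> Hbe; have Hm0 : m = 0.
    by have := least_empty_le Hm (empty_rcons (i:=0) Hbe); lia.
  by rewrite Hm0 zero_ext_rcons0 //; lia.
move/regularE: Hreg => /(_ ltac:(lia)) [[p Hsp]|[q [Hd _]]]; last first.
  by case: He; apply: dense_children_nonempty Hb Hs Hd Hma.
have Emp := sparse_least_empty Hb Hs Hsp Hm; subst p.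
apply/regularE; first lia.
left; exists m.+1; apply: sparse_after _ Hsp Hma (empty_set1_first_only He).
by move=> i; apply: agree_below_set1_sibling (prefix_prefix _ _).
Qed.

Lemma next_spec_large phi b m0 m psi : 2 < k - size b ->
  least_empty a k phi b m0 -> a 2 <= m0 -> least_nonfull a k phi b m ->
  (in_range a k (rcons b m) -> regular phi (rcons b m) ->
     next_spec phi (rcons b m) psi) ->
  in_range a k b -> regular phi b -> next_spec phi b psi.
Proof.
move=> Hsb Hm0 Ha2 Hm IH Hb Hreg.
have Hs : size b <= k - 2 by lia.
have Hsb' : size b < k.-1 by lia.
have Hnf := Hm.1.
have [IH_nonfull _ IH_reg] := IH (nonfull_in_range Hnf) (regular_rcons m Hsb' Hreg).
have [x [Hx Hmx Epsi]] := IH_nonfull Hnf; subst psi.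
split.
- by move=> _; exists x; split=> //; exact: prefix_trans (prefix_rcons b m) Hmx.
- move=> Hbe; exfalso; have := least_empty_le Hm0 (empty_rcons (i:=0) Hbe).
  by have := a2_gt0; lia.
apply/regularE => //; right; exists m; split=> //.
apply: dense_after.
- by move=> i; apply: agree_below_set1_sibling Hmx.
- move/regularE: Hreg => /(_ Hsb') [[p Hsp]|[q [Hd _]]].
    have Emp := sparse_least_empty Hb Hs Hsp Hm0; subst p.
    apply: sparse_sparse_above; have [Hp _ _] := Hsp.
    by have <- : m0 = a 2 by lia.
  have [Hq_full _ _] := Hd.
  exact: dense_sparse_above Hd (least_nonfull_ge Hm Hq_full).
- by move=> i Hi; apply/full_set1/Hm.2.
- exact: nonempty_set1_self.
Qed.

Lemma NextR_spec phi b psi : NextR a k phi b psi ->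
  in_range a k b -> regular phi b -> next_spec phi b psi.
Proof.
elim=> {phi b psi} [phi b m|phi b m psi|phi b m0 m psi].
- exact: next_spec_leaf.
- by move=> Hsb Hm Hma _ IH; apply: next_spec_small Hsb Hm Hma IH.
- by move=> Hsb Hm0 Ha2 Hm _ IH; apply: next_spec_large Hsb Hm0 Ha2 Hm IH.
Qed.

Lemma IterNext_regular n phi psi :
  IterNext a k n phi psi -> regular phi [::] -> regular psi [::].
Proof.
elim=> // m phi0 phi1 phi2 HN _ IH Hreg; apply: IH.
by have [_ _ Hreg1] := NextR_spec HN erefl Hreg.
Qed.

Lemma NextR_empty phi d : in_range a k d -> size d <= k - 2 -> empty a k phi d ->
  NextR a k phi d (Defs.set1 phi (zero_ext d)).
Proof.
move Et: (k - 2 - size d) => t; elim: t d Et => [|t IH] d Et Hr Hs He.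
  have -> : zero_ext d = rcons d 0.
    by rewrite -zero_ext_rcons0; [apply: zero_ext_id; rewrite size_rcons|]; lia.
  apply: Next_leaf; first lia.
  by split=> //; apply: empty_rcons.
apply: (@Next_small _ _ _ _ 0); first lia.
- by split=> //; apply: empty_rcons.
- exact: a2_gt0.
rewrite -zero_ext_rcons0; last lia.
apply: IH; rewrite ?size_rcons; try lia.
- exact: in_range_rcons_small Hr Hs a2_gt0.
- exact: empty_rcons.
Qed.

Lemma NextR_sparse phi b p : in_range a k b -> size b <= k - 2 ->
  sparse phi b p -> p < a 2 -> NextR a k phi b (Defs.set1 phi (zero_ext (rcons b p))).
Proof.
move=> Hr Hs Hsp Hp; have [_ _ Hempty] := Hsp.
have Hm : least_empty a k phi b p.
  by split=> [|i]; [apply: Hempty | apply: sparse_children_nonempty Hr Hs Hsp].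
case: (eqVneq (size b) (k - 2)) => Hsk.
  rewrite zero_ext_id; last by rewrite size_rcons; lia.
  by apply: Next_leaf => //; lia.
apply: (@Next_small _ _ _ _ p) => //; first lia.
apply: NextR_empty; last exact: Hempty.
- exact: in_range_rcons_small Hr Hs Hp.
- by rewrite size_rcons; lia.
Qed.

Section Violation.
Variable c : nat.
Hypothesis c_range : 0 < c <= a 2.

Definition violation phi al : Prop :=
  [/\ is_short_prefix a k al, 1 < a (k - size al), nonempty a k phi (rcons al 1)
    & ~ nonempty a k phi (rcons al c.-1)].

Lemma Kc_connected_no_violation phi :
  (forall al, ~ violation phi al) -> Kc_connected a k c phi.
Proof. by move=> Hno al Hal H1 Hne1; apply: NNPP => Hnec; apply: (Hno al). Qed.

Definition mixed phi b : Prop :=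
  [/\ nonempty a k phi b, ~ full a k phi b & ~ first_only phi b].

Lemma violation_prefix_mixed phi al d : violation phi al -> prefix d al -> mixed phi d.
Proof.
move=> [/andP[Hs Hr] _ Hne1 Hnec] Hd.
have Hd1 : prefix d (rcons al 1) := prefix_trans Hd (prefix_rcons al 1).
split.
- exact: nonempty_prefix Hd1 Hne1.
- move=> Hfull; apply: Hnec; apply: full_nonempty.
  + by apply: in_range_rcons_small => //; lia.
  + by rewrite size_rcons; lia.
  + exact: full_prefix (prefix_trans Hd (prefix_rcons _ _)) Hfull.
- move=> Hfirst; have [y [Hy Hy1 Hphi]] := Hne1.
  have := Hfirst y Hy (prefix_trans Hd1 Hy1); rewrite Hphi => /esym/eqP Ey.
  move: Hy1; rewrite Ey => /prefix_rcons_cat[/size_prefix|/nseqP[] //].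
  by rewrite size_rcons; have := size_prefix Hd; lia.
Qed.

Lemma sparse_not_mixed phi b p i : sparse phi b p -> ~ mixed phi (rcons b i).
Proof.
move=> [_ Hfirst Hempty] [Hne _ Hnfirst].
by case: (ltnP i p) => Hi; [apply: Hnfirst; apply: Hfirst | apply: Hempty Hne].
Qed.

Lemma dense_mixed_child phi b q i : dense phi b q -> mixed phi (rcons b i) -> i = q.
Proof.
move=> [Hfull [Hfirst Hempty] _] [Hne Hnf Hnfirst].
case: (ltngtP i q) => [Hi|Hi|//]; first by case: Hnf; apply: Hfull.
case: (ltnP i (a 2)) => Hi2; first by case: Hnfirst; apply: Hfirst.
by case: (Hempty i Hi Hi2 Hne).
Qed.

Lemma regular_mixed_child phi b i : size b < k.-1 -> regular phi b ->
  mixed phi (rcons b i) -> dense phi b i /\ regular phi (rcons b i).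
Proof.
move=> Hb /regularE-/(_ Hb) [[p Hsp]|[q [Hd Hreg]]] Hmix.
  by case: (sparse_not_mixed Hsp Hmix).
by rewrite (dense_mixed_child Hd Hmix).
Qed.

Lemma violation_sparse phi al : regular phi al -> violation phi al ->
  exists2 p, 2 <= p <= c.-1 & sparse phi al p.
Proof.
move=> Hreg [/andP[Hs Hr] _ Hne1 Hnec].
have Hc1 : c.-1 < a 2 by lia.
move/regularE: Hreg => /(_ ltac:(lia)) [[p Hsp]|[q [Hd _]]]; last first.
  by case: Hnec; apply: dense_children_nonempty Hr Hs Hd Hc1.
exists p => //; apply/andP; split; rewrite leqNgt; apply/negP => Hp.
  by have [_ _ Hempty] := Hsp; apply: (Hempty 1) Hne1; lia.
exact: Hnec (sparse_children_nonempty Hr Hs Hsp Hp).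
Qed.

Lemma violation_uniq phi al be : regular phi [::] ->
  violation phi al -> violation phi be -> al = be.
Proof.
move=> Hnil Hal Hbe.
have Hsize g : violation phi g -> size g <= k - 2 by case=> /andP[].
have Hprefix g h : violation phi g -> violation phi h -> prefix g h -> g = h.
  move=> Hg Hh Hgh; case: (ltnP (size g) (size h)) => Hsz; last first.
    by apply: (prefix_size_eq Hgh); apply/eqP; rewrite eqn_leq (size_prefix Hgh).
  have [y Hy] := prefix_rcons_exists Hgh Hsz.
  have Hgk : size g <= k.-1 by have := Hsize g Hg; lia.
  have [p _ Hsp] := violation_sparse (regular_nil Hnil Hgk) Hg.
  by case: (sparse_not_mixed Hsp (violation_prefix_mixed Hh Hy)).
case: (prefix_or_fork al be) => [H|H|[u [x [y [s' [t' [Hxy Eal Ebe]]]]]]].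
- exact: Hprefix.
- exact/esym/Hprefix.
have Hu : size u < k.-1 by have := Hsize _ Hal; rewrite Eal size_cat /=; lia.
have Hx : prefix (rcons u x) al by rewrite Eal -cat_rcons prefix_prefix.
have Hy : prefix (rcons u y) be by rewrite Ebe -cat_rcons prefix_prefix.
have [Hd _] := regular_mixed_child Hu (regular_nil Hnil (ltnW Hu))
  (violation_prefix_mixed Hal Hx).
by move: Hxy; rewrite (dense_mixed_child Hd (violation_prefix_mixed Hbe Hy)) eqxx.
Qed.

Lemma NextR_mixed_child phi b i psi : size b < k - 2 -> in_range a k b ->
  regular phi b -> mixed phi (rcons b i) ->
  NextR a k phi (rcons b i) psi -> NextR a k phi b psi.
Proof.
move=> Hs Hr Hreg Hmix HN.
have Hb : size b < k.-1 by lia.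
have [Hd _] := regular_mixed_child Hb Hreg Hmix.
have [m0 Hm0] := least_empty_exists phi b.
have Ha2 : a 2 <= m0.
  by apply: least_empty_ge Hm0 _ => j; apply: dense_children_nonempty Hr _ Hd; lia.
have [Hfull _ _] := Hd; have [_ Hnf _] := Hmix.
by apply: (@Next_large _ _ _ _ m0 i) => //; lia.
Qed.

Lemma NextR_violation phi al psi : regular phi [::] -> violation phi al ->
  NextR a k phi al psi -> NextR a k phi [::] psi.
Proof.
move=> Hnil Hal HN; have [/andP[Hs Hr] _ _ _] := Hal.
suff Hg n g : prefix g al -> size al - size g = n -> NextR a k phi g psi.
  exact: Hg (prefix0s al) erefl.
elim: n g => [|n IH] g Hg Et.
  have -> : g = al.
    apply: (prefix_size_eq Hg); apply/eqP.
    by rewrite eqn_leq (size_prefix Hg) -subn_eq0 Et.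
  exact: HN.
have Hgal : size g < size al by lia.
have [i Hi] := prefix_rcons_exists Hg Hgal.
apply: NextR_mixed_child (in_range_prefix Hg Hr) _ (violation_prefix_mixed Hal Hi) _.
- lia.
- by apply: regular_nil Hnil _; lia.
- by apply: IH Hi _; rewrite size_rcons; lia.
Qed.

Lemma violation_step phi al : regular phi [::] -> violation phi al ->
  exists psi, [/\ NextR a k phi [::] psi, regular psi [::],
    forall be, violation psi be -> be = al
  & forall j i, nonempty a k phi (rcons al j) -> i <= j.+1 ->
      nonempty a k psi (rcons al i)].
Proof.
move=> Hnil Hal; have [/andP[Hs Hr] _ Hne1 _] := Hal.
have Hal_k : size al <= k.-1 by lia.
have [p /andP[Hp2 Hpc] Hsp] := violation_sparse (regular_nil Hnil Hal_k) Hal.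
have Hpa : p < a 2 by lia.
set x := zero_ext (rcons al p).
have Hx : is_elem a k x.
  by apply: zero_ext_elem (in_range_rcons_small Hr Hs Hpa) _; rewrite size_rcons; lia.
have HN := NextR_violation Hnil Hal (NextR_sparse Hr Hs Hsp Hpa).
exists (Defs.set1 phi x); split=> //.
- by have [_ _] := NextR_spec HN erefl Hnil.
- move=> be [Hbe_s Hbe_a Hbe1 Hbec].
  have Hne : nonempty a k phi (rcons be 1).
    case: (set1_nonempty_inv Hbe1) => // Hbe1x.
    move: Hbe1x; rewrite /x /zero_ext cat_rcons => /prefix_rcons_cat[Hbe_al|].
      exact: nonempty_prefix (prefix_trans Hbe_al (prefix_rcons al 1)) Hne1.
    by rewrite in_cons => /orP[/eqP|/nseqP[]]; lia.
  apply: esym; apply: violation_uniq Hnil Hal _; split=> //.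
  by move/(nonempty_set1 x).
- move=> j i Hj Hij; have [_ _ Hempty] := Hsp.
  have Hjp : j < p by rewrite ltnNge; apply/negP => /Hempty.
  case: (ltngtP i p) => Hip; last 1 first.
  + by rewrite Hip; apply: nonempty_set1_self Hx (prefix_prefix _ _).
  + exact/nonempty_set1/(sparse_children_nonempty Hr Hs Hsp Hip).
  + lia.
Qed.

Lemma Kc_connected_within n phi : regular phi [::] ->
  (forall al, violation phi al -> nonempty a k phi (rcons al (c.-1 - n))) ->
  exists j, j <= n /\ exists psi, IterNext a k j phi psi /\ Kc_connected a k c psi.
Proof.
elim: n phi => [|n IH] phi Hnil Hviol.
  exists 0; split=> //; exists phi; split; first exact: Iter0.
  apply: Kc_connected_no_violation => al Hal.
  by have := Hviol al Hal; rewrite subn0; case: Hal.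
case: (classic (exists al, violation phi al)) => [[al Hal]|Hno]; last first.
  exists 0; split=> //; exists phi; split; first exact: Iter0.
  by apply: Kc_connected_no_violation => al Hal; apply: Hno; exists al.
have [psi [HN Hnil' Huniq Hgrow]] := violation_step Hnil Hal.
have Hviol' be : violation psi be -> nonempty a k psi (rcons be (c.-1 - n)).
  by move/Huniq ->; apply: Hgrow (Hviol al Hal) _; lia.
have [j [Hj [chi [Hit Hkc]]]] := IH psi Hnil' Hviol'.
exists j.+1; split; first lia.
by exists chi; split=> //; apply: IterS HN Hit.
Qed.

End Violation.

End Listing.

Theorem corollary2 (k : nat) (a : nat -> nat) (c : nat) (phi : listing) :
  2 <= k ->
  (forall i, 2 <= i <= k -> 0 < a i) ->
  (forall i, 2 < i <= k -> a 2 <= a i) ->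
  0 < c <= a 2 ->
  partial_listing a k phi ->
  exists j, j <= c - 2 /\
    exists psi, IterNext a k j phi psi /\ Kc_connected a k c psi.
Proof.
move=> Hk Hpos Hmin Hc [n Hit].
have Hzero : empty a k zero_listing [::] by case=> y [].
have Hnil := IterNext_regular Hk Hpos Hmin Hit (regular_empty Hzero).
apply: (Kc_connected_within Hk Hpos Hmin Hc Hnil) => al Hal.
have Hal_k : size al <= k.-1 by case: Hal => /andP[Hs _] _ _ _; lia.
have Hreg_al := regular_nil Hk Hpos Hmin Hnil Hal_k.
have [p /andP[Hp2 Hpc] _] := violation_sparse Hk Hpos Hmin Hc Hreg_al Hal.
have -> : c.-1 - (c - 2) = 1 by lia.
by case: Hal.
Qed.
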